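(* Let $q\ge1$ be an integer. Suppose there are constants $\varepsilon,\delta>0$ and a Borel set $K\subset[0,1)$ such that: (i) $e(q,x;\varepsilon,\delta)\le1$ for $x\in K$ and $e(q,x;\varepsilon,\delta)\le2$ for $x\in[0,1)\setminus K$; (ii) if $(\mathbf{u},\mathbf{v})\in E(q,x;\varepsilon,\delta)$ for some $x\in[0,1)\setminus K$ with $\mathbf{u}\ne\mathbf{v}$, then $x(\mathbf{u})\in K$ or $x(\mathbf{v})\in K$. Then $\sigma(q)\le(\sqrt5+1)/2$.
   Context: Standing setup: $b\ge2$ integer, $\mathcal{A}=\{0,\dots,b-1\}$, $\gamma\in(1/b,1)$, $\psi$ a $\mathbb{Z}$-periodic $C^1$ function. $S(x,\mathbf{i})=\sum_{n\ge1}\gamma^{n-1}\psi\big(\frac{x+i_1+i_2b+\cdots+i_nb^{n-1}}{b^n}\big)$, $S'=\partial_xS$. For $\mathbf{u}\in\mathcal{A}^q$, $x(\mathbf{u})=(x+u_1+u_2b+\cdots+u_qb^{q-1})/b^q$. Sequences $\mathbf{i},\mathbf{j}$ are $(\varepsilon,\delta)$-tangent at $x_0$ if $|S(x_0,\mathbf{i})-S(x_0,\mathbf{j})|\le\varepsilon$ and $|S'(x_0,\mathbf{i})-S'(x_0,\mathbf{j})|\le\delta$. $E(q,x_0;\varepsilon,\delta)$: pairs $(\mathbf{k},\mathbf{l})\in\mathcal{A}^q\times\mathcal{A}^q$ such that some concatenations $\mathbf{ku},\mathbf{lv}$ are $(\varepsilon,\delta)$-tangent at $x_0$; $e(q,x_0;\varepsilon,\delta)=\max_{\mathbf{k}}\#\{\mathbf{l}:(\mathbf{k},\mathbf{l})\in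 E(q,x_0;\varepsilon,\delta)\}$. Weight function: measurable $\omega:[0,1)\to(0,\infty)$ with $\omega,1/\omega$ bounded. Admissible testing function of order $q$: measurable $V:[0,1)\times\mathcal{A}^q\times\mathcal{A}^q\to[0,\infty)$ such that for some $\varepsilon,\delta>0$, $V(x,\mathbf{u},\mathbf{v})V(x,\mathbf{v},\mathbf{u})\ge1$ whenever $x\in[0,1)$ and $(\mathbf{u},\mathbf{v})\in E(q,x;\varepsilon,\delta)$. $\Sigma_{V,\omega}(x)=\sup_{\mathbf{u}}\frac{\omega(x)}{\omega(x(\mathbf{u}))}\sum_{\mathbf{v}}V(x,\mathbf{u},\mathbf{v})$; $\sigma(q)=\inf_{\omega,V}\|\Sigma_{V,\omega}\|_\infty$. *)

From Stdlib Require Import Reals Lra List Arith ClassicalEpsilon.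
Import ListNotations.
Open Scope R_scope.

Definition decP (P : Prop) : bool :=
  if excluded_middle_informative P then true else false.

Inductive Borel : (R -> Prop) -> Prop :=
| Borel_interval (a c : R) : Borel (fun x => a < x < c)
| Borel_compl (A : R -> Prop) : Borel A -> Borel (fun x => ~ A x)
| Borel_union (F : nat -> R -> Prop) :
    (forall n, Borel (F n)) -> Borel (fun x => exists n, F n x)
| Borel_ext (A B : R -> Prop) : Borel A -> (forall x, A x <-> B x) -> Borel B.

Definition null_set (A : R -> Prop) : Prop :=
  forall eps, 0 < eps ->
    exists a c : nat -> R,
      (forall n, a n <= c n) /\
      (forall x, A x -> exists n, a n < x < c n) /\
      (forall N, sum_f_R0 (fun n => c n - a n) N <= eps).

Definition leb_measurable (A : R -> Prop) : Prop :=
  exists B N, Borel B /\ null_set N /\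
    (forall x, (A x /\ ~ B x) \/ (B x /\ ~ A x) -> N x).

Definition measurable01 (f : R -> R) : Prop :=
  forall B, Borel B -> leb_measurable (fun x => 0 <= x < 1 /\ B (f x)).

Definition ess_bounded_by (f : R -> R) (M : R) : Prop :=
  null_set (fun x => 0 <= x < 1 /\ M < f x).

(** Digit sequences i = (i_1, i_2, ...) in A^N, stored 0-indexed: i n = i_{n+1}. *)
Definition digit_seq (b : nat) (i : nat -> nat) : Prop := forall n, (i n < b)%nat.

Definition word (b q : nat) (u : list nat) : Prop :=
  length u = q /\ Forall (fun d => (d < b)%nat) u.

Fixpoint words (b q : nat) : list (list nat) :=
  match q with
  | O => [[]]
  | S q' => flat_map (fun d => map (fun w => d :: w) (words b q')) (seq 0 b)
  end.

Definition concat (k : list nat) (u : nat -> nat) : nat -> nat :=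
  fun n => if Nat.ltb n (length k) then nth n k 0%nat else u (n - length k)%nat.

Definition xmap (b : nat) (x : R) (u : list nat) : R :=
  (x + fold_right Rplus 0
         (map (fun m => INR (nth m u 0%nat) * INR b ^ m) (seq 0 (length u))))
  / INR b ^ length u.

(** S(x,i) = sum_{n>=1} gamma^{n-1} psi((x + i_1 + ... + i_n b^{n-1}) / b^n). *)
Definition S_term (b : nat) (gamma : R) (psi : R -> R) (x : R) (i : nat -> nat)
  (k : nat) : R :=
  gamma ^ k *
  psi ((x + sum_f_R0 (fun m => INR (i m) * INR b ^ m) k) / INR b ^ (S k)).

Definition S_fun (b : nat) (gamma : R) (psi : R -> R) (x : R) (i : nat -> nat) : R :=
  epsilon (inhabits 0)
    (fun l => Un_cv (fun N => sum_f_R0 (S_term b gamma psi x i) N) l).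

Definition tangent (b : nat) (gamma : R) (psi : R -> R)
  (eps delta x0 : R) (i j : nat -> nat) : Prop :=
  Rabs (S_fun b gamma psi x0 i - S_fun b gamma psi x0 j) <= eps /\
  exists di dj,
    derivable_pt_lim (fun x => S_fun b gamma psi x i) x0 di /\
    derivable_pt_lim (fun x => S_fun b gamma psi x j) x0 dj /\
    Rabs (di - dj) <= delta.

Definition inE (b : nat) (gamma : R) (psi : R -> R) (q : nat) (x0 eps delta : R)
  (k l : list nat) : Prop :=
  word b q k /\ word b q l /\
  exists u v, digit_seq b u /\ digit_seq b v /\
    tangent b gamma psi eps delta x0 (concat k u) (concat l v).

Definition e_num (b : nat) (gamma : R) (psi : R -> R) (q : nat) (x0 eps delta : R)
  : nat :=
  fold_right Nat.max 0%nat
    (map (fun k => length (filter (fun l => decP (inE b gamma psi q x0 eps delta k l))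
                                  (words b q)))
         (words b q)).

Definition weight (omega : R -> R) : Prop :=
  measurable01 omega /\
  (forall x, 0 <= x < 1 -> 0 < omega x) /\
  (exists M, forall x, 0 <= x < 1 -> omega x <= M /\ / omega x <= M).

Definition admissible (b : nat) (gamma : R) (psi : R -> R) (q : nat)
  (V : R -> list nat -> list nat -> R) : Prop :=
  (forall u v, word b q u -> word b q v -> measurable01 (fun x => V x u v)) /\
  (forall x u v, 0 <= x < 1 -> word b q u -> word b q v -> 0 <= V x u v) /\
  exists eps delta, 0 < eps /\ 0 < delta /\
    forall x u v, 0 <= x < 1 ->
      inE b gamma psi q x eps delta u v -> 1 <= V x u v * V x v u.

(** Sigma_{V,omega}(x) = max_u omega(x)/omega(x(u)) * sum_v V(x,u,v)
    (all terms are >= 0, so folding Rmax from 0 gives the maximum). *)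
Definition Sigma (b q : nat) (omega : R -> R) (V : R -> list nat -> list nat -> R)
  (x : R) : R :=
  fold_right Rmax 0
    (map (fun u => omega x / omega (xmap b x u) *
                   fold_right Rplus 0 (map (fun v => V x u v) (words b q)))
         (words b q)).

(** sigma(q) <= c, where sigma(q) = inf_{omega,V} ||Sigma_{V,omega}||_oo. *)
Definition sigma_le (b : nat) (gamma : R) (psi : R -> R) (q : nat) (c : R) : Prop :=
  forall eta, 0 < eta ->
    exists omega V, weight omega /\ admissible b gamma psi q V /\
      ess_bounded_by (Sigma b q omega V) (c + eta).

From Pilot Require Import Defs.
From Stdlib Require Import Reals Lra Lia ZArith List FinFun Classical ClassicalEpsilon.
Open Scope R_scope.

(* Take the weight omega = 1 on K and omega = 1/phi off K, and the testing
   function V(x,u,v) = omega(x(u)) / omega(x(v)) on tangent pairs (u,v), 0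
   elsewhere.  Then V(x,u,v) V(x,v,u) = 1, and the u-th term of Sigma is
   sum_v omega(x) / omega(x(v)) over the pairs tangent to u.  On K only v = u
   contributes, and omega(x)/omega(x(u)) <= phi.  Off K at most two words
   contribute, each at most 1, and when there are two, one of x(u), x(v) lies
   in K, which lowers its term to 1/phi = phi - 1; so the sum is at most phi.
   Since E need not be measurable in x, tangency is tested only on
   continuations that vanish after L digits: for L large the tails of S and S'
   are uniformly small, so this Borel relation sits between E(q,x;eps/2,delta/2)
   and E(q,x;eps,delta). *)

Lemma decP_true_iff (P : Prop) : decP P = true <-> P.
Proof. unfold decP; destruct (excluded_middle_informative P); split; congruence || tauto. Qed.

Lemma decP_false (P : Prop) : ~ P -> decP P = false.
Proof. unfold decP; destruct (excluded_middle_informative P); tauto. Qed.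

Lemma Borel_const (P : Prop) : Borel (fun _ => P).
Proof.
assert (empty : Borel (fun x => 0 < x < 0)) by apply Borel_interval.
destruct (classic P) as [HP | HP].
- apply (Borel_ext _ _ (Borel_compl _ empty)); intros x; split; [tauto | lra].
- apply (Borel_ext _ _ empty); intros x; split; [lra | tauto].
Qed.

Lemma Borel_or (A B : R -> Prop) : Borel A -> Borel B -> Borel (fun x => A x \/ B x).
Proof.
intros HA HB.
apply (Borel_ext (fun x => exists n, (if Nat.eqb n 0 then A else B) x)).
- apply Borel_union; intros [|n]; assumption.
- intros x; split.
  + intros [[|n] H]; auto.
  + intros [H | H]; [exists 0%nat | exists 1%nat]; exact H.
Qed.

Lemma Borel_and (A B : R -> Prop) : Borel A -> Borel B -> Borel (fun x => A x /\ B x).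
Proof.
intros HA HB.
apply (Borel_ext (fun x => ~ (~ A x \/ ~ B x))).
- apply Borel_compl, Borel_or; apply Borel_compl; assumption.
- intros x; tauto.
Qed.

Lemma Borel_exists_in_list {T : Type} (l : list T) (P : T -> R -> Prop) :
  (forall a, In a l -> Borel (P a)) -> Borel (fun x => exists a, In a l /\ P a x).
Proof.
induction l as [|a l IH]; intros HP.
- apply (Borel_ext _ _ (Borel_const False)); intros x; split; [tauto|].
  intros [? [[] _]].
- apply (Borel_ext (fun x => P a x \/ exists a', In a' l /\ P a' x)).
  + apply Borel_or; [apply HP; left; reflexivity | apply IH; intros; apply HP; right; auto].
  + intros x; split.
    * intros [H | [a' [Ha' H]]]; [exists a | exists a']; simpl; auto.
    * intros [a' [[<- | Ha'] H]]; [left | right; exists a']; auto.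
Qed.

Lemma Borel_decP_preimage (P : R -> Prop) (g : bool -> R -> R) (B : R -> Prop) :
  Borel P -> (forall c, Borel (fun x => B (g c x))) ->
  Borel (fun x => B (g (decP (P x)) x)).
Proof.
intros HP Hg.
apply (Borel_ext (fun x => (P x /\ B (g true x)) \/ (~ P x /\ B (g false x)))).
- apply Borel_or; apply Borel_and; auto; apply Borel_compl; exact HP.
- intros x; unfold decP; destruct (excluded_middle_informative (P x)); tauto.
Qed.

Lemma Borel_unit_interval : Borel (fun x => 0 <= x < 1).
Proof.
apply (Borel_ext (fun x => -1 < x < 1 /\ ~ (-1 < x < 0))).
- apply Borel_and; [|apply Borel_compl]; apply Borel_interval.
- intros x; lra.
Qed.

Lemma Borel_affine_preimage (A : R -> Prop) c d :
  Borel A -> 0 < d -> Borel (fun x => A ((x + c) / d)).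
Proof.
intros HA; revert c d; induction HA as [a e | A _ IH | F _ IH | A B _ IH HAB];
  intros c d Hd.
- apply (Borel_ext (fun x => a * d - c < x < e * d - c)); [apply Borel_interval|].
  intros x; assert (Hx : x = (x + c) / d * d - c) by (field; lra).
  set (y := (x + c) / d) in *; split; intros [H1 H2]; split; nra.
- apply Borel_compl, IH, Hd.
- apply Borel_union; intros n; apply IH, Hd.
- apply (Borel_ext _ _ (IH c d Hd)); intros x; apply HAB.
Qed.

(* The intervals ]a/c - m, (a+2)/c - m[ with a, c, m natural numbers form a
   countable base of the topology of R. *)
Lemma grid_interval_in_disc (x r : R) : 0 < r ->
  exists m c a : nat,
    INR a / INR c - INR m < x < (INR a + 2) / INR c - INR m /\
    forall y, INR a / INR c - INR m < y < (INR a + 2) / INR c - INR m ->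
      Rabs (y - x) < r.
Proof.
intros Hr.
destruct (archimed_cor1 (r / 2)) as [c [Hc Hc0]]; [lra|].
destruct (INR_archimed 1 (1 - x)) as [m Hm]; [lra|].
assert (Hc1 : 1 <= INR c) by (apply (le_INR 1); lia).
set (t := (x + INR m) * INR c).
assert (Ht : 1 < t) by (unfold t; nra).
destruct (archimed t) as [Hup1 Hup2].
assert (Hup : (1 < up t)%Z) by (apply lt_IZR; lra).
exists m, c, (Z.to_nat (up t - 2)).
rewrite INR_IZR_INZ, Z2Nat.id, minus_IZR by lia.
assert (Hxt : x = t / INR c - INR m) by (unfold t; field; lra).
assert (Hlo : (IZR (up t) - 2) / INR c < t / INR c) by
  (apply Rmult_lt_compat_r; [apply Rinv_0_lt_compat|]; lra).
assert (Hhi : t / INR c < (IZR (up t) - 2 + 2) / INR c) by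
  (apply Rmult_lt_compat_r; [apply Rinv_0_lt_compat|]; lra).
assert (Hw : (IZR (up t) - 2 + 2) / INR c - (IZR (up t) - 2) / INR c = 2 / INR c)
  by (field; lra).
assert (Hwr : 2 / INR c < r) by (unfold Rdiv in *; lra).
split; [lra|]; intros y Hy; apply Rabs_def1; lra.
Qed.

Lemma Borel_open_set (U : R -> Prop) : open_set U -> Borel U.
Proof.
intros HU.
set (J := fun m c a : nat => fun y =>
  INR a / INR c - INR m < y < (INR a + 2) / INR c - INR m).
apply (Borel_ext (fun x => exists m c a, (forall y, J m c a y -> U y) /\ J m c a x)).
- do 3 (apply Borel_union; intro); apply Borel_and; [apply Borel_const | apply Borel_interval].
- intros x; split; [intros [m [c [a [HJ Hx]]]]; auto|].
  intros Hx; destruct (HU x Hx) as [r Hr].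
  destruct (grid_interval_in_disc x r (cond_pos r)) as [m [c [a [HJx HJr]]]].
  exists m, c, a; split; [intros y Hy; apply Hr, HJr, Hy | exact HJx].
Qed.

Lemma Borel_continuous_gt (g : R -> R) e : continuity g -> Borel (fun x => e < g x).
Proof.
intros Hg; apply Borel_open_set.
apply (continuity_P2 g (fun y => e < y) Hg).
intros y Hy; exists (mkposreal (y - e) ltac:(lra)); intros z Hz.
unfold disc in Hz; simpl in Hz; apply Rabs_def2 in Hz; lra.
Qed.

Lemma null_set_empty (A : R -> Prop) : (forall x, ~ A x) -> null_set A.
Proof.
intros HA eps Heps; exists (fun _ => 0), (fun _ => 0).
split; [intros; lra|]; split.
- intros x Hx; destruct (HA x Hx).
- intros N; induction N; simpl; lra.
Qed.

Lemma measurable01_Borel (f : R -> R) :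
  (forall B, Borel B -> Borel (fun x => B (f x))) -> measurable01 f.
Proof.
intros Hf B HB; exists (fun x => 0 <= x < 1 /\ B (f x)), (fun _ => False).
split; [apply Borel_and; [apply Borel_unit_interval | apply Hf, HB]|].
split; [apply null_set_empty; auto | intros x; tauto].
Qed.
Lemma periodic_shift_int (f : R -> R) :
  (forall x, f (x + 1) = f x) -> forall x z, f (x + IZR z) = f x.
Proof.
intros Hf.
assert (Hnat : forall x n, f (x + INR n) = f x).
{ intros x n; induction n as [|n IH]; [rewrite Rplus_0_r; reflexivity|].
  rewrite S_INR, <- Rplus_assoc, Hf; exact IH. }
intros x [|p|p].
- rewrite Rplus_0_r; reflexivity.
- rewrite <- positive_nat_Z, <- INR_IZR_INZ; apply Hnat.
- rewrite <- (Hnat (x + IZR (Z.neg p)) (Pos.to_nat p)), INR_IZR_INZ, positive_nat_Z.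
  f_equal; rewrite <- Pos2Z.opp_pos, opp_IZR; ring.
Qed.

Lemma continuous_periodic_bounded (f : R -> R) :
  (forall x, f (x + 1) = f x) -> continuity f -> exists M, forall y, Rabs (f y) <= M.
Proof.
intros Hf Hc.
destruct (continuity_ab_maj f 0 1) as [xM [HM _]]; [lra | intros; apply Hc|].
destruct (continuity_ab_min f 0 1) as [xm [Hm _]]; [lra | intros; apply Hc|].
exists (Rmax (Rabs (f xM)) (Rabs (f xm))); intros y.
destruct (base_Int_part y) as [Hy1 Hy2].
replace (f y) with (f (y - IZR (Int_part y))) by
  (rewrite <- (periodic_shift_int f Hf _ (Int_part y)); f_equal; ring).
specialize (HM (y - IZR (Int_part y)) ltac:(lra)).
specialize (Hm (y - IZR (Int_part y)) ltac:(lra)).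
apply Rabs_le; split.
- pose proof (Rle_abs (- f xm)); rewrite Rabs_Ropp in *.
  pose proof (Rmax_r (Rabs (f xM)) (Rabs (f xm))); lra.
- pose proof (Rle_abs (f xM)); pose proof (Rmax_l (Rabs (f xM)) (Rabs (f xm))); lra.
Qed.

Lemma derivative_periodic (f df : R -> R) :
  (forall x, f (x + 1) = f x) -> (forall x, derivable_pt_lim f x (df x)) ->
  forall x, df (x + 1) = df x.
Proof.
intros Hf Hdf x; apply (uniqueness_limite f x); [|apply Hdf].
intros eps Heps; destruct (Hdf (x + 1) eps Heps) as [del Hdel]; exists del.
intros h Hh Hhd; specialize (Hdel h Hh Hhd).
replace (x + 1 + h) with (x + h + 1) in Hdel by ring; rewrite !Hf in Hdel; exact Hdel.
Qed.

Lemma geometric_tail_small (C r : R) : 0 <= C -> 0 <= r < 1 ->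
  forall eps, 0 < eps -> exists N, forall n, (N <= n)%nat -> C * r ^ n / (1 - r) < eps.
Proof.
intros HC Hr eps Heps.
destruct (pow_lt_1_zero r ltac:(rewrite Rabs_pos_eq; lra) (eps * (1 - r) / (C + 1)))
  as [N HN]; [apply Rdiv_lt_0_compat; [apply Rmult_lt_0_compat|]; lra|].
exists N; intros n Hn; specialize (HN n Hn).
rewrite Rabs_pos_eq in HN by (apply pow_le; lra).
apply (Rmult_lt_reg_r (1 - r)); [lra|].
replace (C * r ^ n / (1 - r) * (1 - r)) with (C * r ^ n) by (field; lra).
apply (Rmult_lt_reg_r (/ (C + 1))); [apply Rinv_0_lt_compat; lra|].
apply (Rle_lt_trans _ (r ^ n)); [|unfold Rdiv in HN; lra].
apply (Rmult_le_reg_r (C + 1)); [lra|].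
replace (C * r ^ n * / (C + 1) * (C + 1)) with (C * r ^ n) by (field; lra).
pose proof (pow_le r n (proj1 Hr)); nra.
Qed.

Lemma sum_geometric (C r : R) (N : nat) : r <> 1 ->
  sum_f_R0 (fun k => C * r ^ k) N = C * (1 - r ^ S N) / (1 - r).
Proof.
intros Hr; rewrite (sum_eq _ (fun k => r ^ k * C)) by (intros; ring).
rewrite <- scal_sum, tech3 by exact Hr; unfold Rdiv; ring.
Qed.

Lemma Un_cv_geometric (C r : R) : 0 <= r < 1 ->
  Un_cv (fun N => sum_f_R0 (fun k => C * r ^ k) N) (C / (1 - r)).
Proof.
intros Hr eps Heps.
destruct (geometric_tail_small (Rabs C) r (Rabs_pos C) Hr eps Heps) as [N HN].
exists N; intros n Hn; unfold R_dist.
rewrite sum_geometric by lra.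
replace (C * (1 - r ^ S n) / (1 - r) - C / (1 - r)) with (- (C * r ^ S n / (1 - r)))
  by (field; lra).
unfold Rdiv; rewrite Rabs_Ropp, !Rabs_mult, Rabs_inv, (Rabs_pos_eq (r ^ S n)),
  (Rabs_pos_eq (1 - r)) by (try apply pow_le; lra).
apply HN; lia.
Qed.

(* Junk value 0 on divergent series; [S_fun] is [series_sum] of [S_term] by unfolding. *)
Definition series_sum (a : nat -> R) : R :=
  epsilon (inhabits 0) (fun l => Un_cv (fun N => sum_f_R0 a N) l).

Lemma series_sum_spec (a : nat -> R) (C r : R) : 0 <= r < 1 ->
  (forall k, Rabs (a k) <= C * r ^ k) ->
  Un_cv (fun N => sum_f_R0 a N) (series_sum a) /\
  forall N, Rabs (series_sum a - sum_f_R0 a N) <= C * r ^ S N / (1 - r).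
Proof.
intros Hr Ha.
assert (Hcv : Un_cv (fun N => sum_f_R0 a N) (series_sum a)).
{ apply (epsilon_spec (inhabits 0) (fun l => Un_cv _ l)).
  destruct (Rseries_CV_comp (fun k => Rabs (a k)) (fun k => C * r ^ k)) as [l Hl].
  - intros k; split; [apply Rabs_pos | apply Ha].
  - exists (C / (1 - r)); apply Un_cv_geometric, Hr.
  - destruct (cv_cauchy_2 a (cauchy_abs a (cv_cauchy_1 _ (exist _ l Hl)))) as [l' Hl'].
    exists l'; exact Hl'. }
split; [exact Hcv|]; intros N.
eapply Rle_trans.
- apply (sum_maj1 (fun k _ => a k) (fun k => C * r ^ k) 0 _ (C / (1 - r)) N Hcv
    (Un_cv_geometric C r Hr) Ha).
- right; rewrite sum_geometric by lra; field; lra.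
Qed.

Lemma series_sum_close (a a' : nat -> R) (C r : R) (N : nat) : 0 <= r < 1 ->
  (forall k, Rabs (a k) <= C * r ^ k) -> (forall k, Rabs (a' k) <= C * r ^ k) ->
  sum_f_R0 a N = sum_f_R0 a' N ->
  Rabs (series_sum a - series_sum a') <= 2 * C * r ^ S N / (1 - r).
Proof.
intros Hr Ha Ha' HN.
destruct (series_sum_spec a C r Hr Ha) as [_ Ht].
destruct (series_sum_spec a' C r Hr Ha') as [_ Ht'].
specialize (Ht N); specialize (Ht' N); rewrite HN in Ht.
replace (series_sum a - series_sum a') with
  ((series_sum a - sum_f_R0 a' N) - (series_sum a' - sum_f_R0 a' N)) by ring.
eapply Rle_trans; [apply Rabs_triang|]; rewrite Rabs_Ropp.
replace (2 * C * r ^ S N / (1 - r)) with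
  (C * r ^ S N / (1 - r) + C * r ^ S N / (1 - r)) by (field; lra).
lra.
Qed.

Lemma affine_derivable (c A x : R) : A <> 0 ->
  derivable_pt_lim (fun y => (y + c) / A) x (/ A).
Proof.
intros HA eps Heps; exists (mkposreal 1 Rlt_0_1); intros h Hh _.
replace (((x + h + c) / A - (x + c) / A) / h - / A) with 0 by (field; auto).
rewrite Rabs_R0; exact Heps.
Qed.

Lemma continuity_abs_diff (f g : R -> R) :
  continuity f -> continuity g -> continuity (fun y => Rabs (f y - g y)).
Proof.
intros Hf Hg; exact (continuity_comp _ Rabs (continuity_minus f g Hf Hg) Rcontinuity_abs).
Qed.

Section SelfAffineSeries.

Variables (b : nat) (gamma : R) (psi dpsi : R -> R) (M M' : R).
Hypothesis hb : (2 <= b)%nat.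
Hypothesis hgamma : 0 <= gamma < 1.
Hypothesis psi_bounded : forall y, Rabs (psi y) <= M.
Hypothesis dpsi_bounded : forall y, Rabs (dpsi y) <= M'.
Hypothesis psi_derivable : forall y, derivable_pt_lim psi y (dpsi y).
Hypothesis dpsi_continuous : continuity dpsi.

Definition S_arg (x : R) (i : nat -> nat) (k : nat) : R :=
  (x + sum_f_R0 (fun m => INR (i m) * INR b ^ m) k) / INR b ^ S k.

Definition dS_term (x : R) (i : nat -> nat) (k : nat) : R :=
  gamma ^ k * (dpsi (S_arg x i k) / INR b ^ S k).

Definition dS_fun (x : R) (i : nat -> nat) : R := series_sum (dS_term x i).

Lemma pow_INR_b_pos k : 0 < INR b ^ k.
Proof. apply pow_lt, lt_0_INR; lia. Qed.

Lemma gamma_div_b_lt_1 : 0 <= gamma / INR b < 1.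
Proof.
assert (Hb : 2 <= INR b) by (apply (le_INR 2); exact hb).
split; [apply Rle_mult_inv_pos; lra|].
apply (Rmult_lt_reg_r (INR b)); [lra|].
replace (gamma / INR b * INR b) with gamma by (field; lra); lra.
Qed.

Lemma S_term_bound x i k : Rabs (S_term b gamma psi x i k) <= M * gamma ^ k.
Proof.
unfold S_term; rewrite Rabs_mult, Rabs_pos_eq, Rmult_comm by (apply pow_le; lra).
apply Rmult_le_compat_r; [apply pow_le; lra | apply psi_bounded].
Qed.

Lemma dS_term_bound x i k :
  Rabs (dS_term x i k) <= M' / INR b * (gamma / INR b) ^ k.
Proof.
assert (Hb : 0 < INR b) by (apply lt_0_INR; lia).
assert (Hbk := pow_INR_b_pos k).
assert (HbSk := pow_INR_b_pos (S k)).
assert (Hgk : 0 <= gamma ^ k / INR b ^ S k) by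
  (apply Rle_mult_inv_pos; [apply pow_le; lra | apply pow_INR_b_pos]).
unfold dS_term.
replace (gamma ^ k * (dpsi (S_arg x i k) / INR b ^ S k)) with
  (gamma ^ k / INR b ^ S k * dpsi (S_arg x i k)) by (field; lra).
replace (M' / INR b * (gamma / INR b) ^ k) with (gamma ^ k / INR b ^ S k * M')
  by (unfold Rdiv; rewrite Rpow_mult_distr, pow_inv; simpl; field; lra).
rewrite Rabs_mult, Rabs_pos_eq by exact Hgk.
apply Rmult_le_compat_l; [exact Hgk | apply dpsi_bounded].
Qed.

Lemma S_partial_sums_cv x i :
  Un_cv (fun N => sum_f_R0 (S_term b gamma psi x i) N) (S_fun b gamma psi x i).
Proof. exact (proj1 (series_sum_spec _ M gamma hgamma (S_term_bound x i))). Qed.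

Lemma dS_partial_sums_CVU i c :
  CVU (fun n y => sum_f_R0 (dS_term y i) n) (fun y => dS_fun y i) c (mkposreal 1 Rlt_0_1).
Proof.
intros eps Heps.
assert (HC : 0 <= M' / INR b) by
  (apply Rle_mult_inv_pos; [apply (Rle_trans _ _ _ (Rabs_pos (dpsi 0)) (dpsi_bounded 0))
                           | apply lt_0_INR; lia]).
destruct (geometric_tail_small _ _ HC gamma_div_b_lt_1 eps Heps) as [N HN].
exists N; intros n y Hn _.
destruct (series_sum_spec _ _ _ gamma_div_b_lt_1 (dS_term_bound y i)) as [_ Ht].
eapply Rle_lt_trans; [apply Ht | apply HN; lia].
Qed.

Lemma S_term_derivable x i k :
  derivable_pt_lim (fun y => S_term b gamma psi y i k) x (dS_term x i k).
Proof.
set (c := sum_f_R0 (fun m => INR (i m) * INR b ^ m) k).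
set (A := INR b ^ S k).
assert (HA : A <> 0) by (apply Rgt_not_eq, pow_INR_b_pos).
exact (derivable_pt_lim_scal _ (gamma ^ k) x _
  (derivable_pt_lim_comp _ psi x _ _ (affine_derivable c A x HA) (psi_derivable _))).
Qed.

Lemma S_partial_sums_derivable x i n :
  derivable_pt_lim (fun y => sum_f_R0 (S_term b gamma psi y i) n) x
    (sum_f_R0 (dS_term x i) n).
Proof.
induction n as [|n IH]; simpl; [apply S_term_derivable|].
exact (derivable_pt_lim_plus (fun y => sum_f_R0 (S_term b gamma psi y i) n)
  (fun y => S_term b gamma psi y i (S n)) x _ _ IH (S_term_derivable x i (S n))).
Qed.

Lemma S_fun_derivable x i :
  derivable_pt_lim (fun y => S_fun b gamma psi y i) x (dS_fun x i).
Proof.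
apply (CVU_derivable (fun n y => sum_f_R0 (S_term b gamma psi y i) n)
  (fun n y => sum_f_R0 (dS_term y i) n) (fun y => S_fun b gamma psi y i)
  (fun y => dS_fun y i) x (mkposreal 1 Rlt_0_1)).
- apply dS_partial_sums_CVU.
- intros y _; apply S_partial_sums_cv.
- intros n y _; apply S_partial_sums_derivable.
- apply Boule_center.
Qed.

Lemma S_fun_continuous i : continuity (fun y => S_fun b gamma psi y i).
Proof. intros x; apply derivable_continuous_pt; exists (dS_fun x i); apply S_fun_derivable. Qed.

Lemma dS_term_continuous i k : continuity (fun y => dS_term y i k).
Proof.
set (c := sum_f_R0 (fun m => INR (i m) * INR b ^ m) k).
set (A := INR b ^ S k).
assert (HA : A <> 0) by (apply Rgt_not_eq, pow_INR_b_pos).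
intros y; unfold dS_term, S_arg; fold c A.
apply (continuity_pt_mult (fun _ => gamma ^ k) (fun y => dpsi ((y + c) / A) / A));
  [apply continuity_pt_const; intros ? ?; reflexivity|].
apply (continuity_pt_div (fun y => dpsi ((y + c) / A)) (fun _ => A));
  [ | apply continuity_pt_const; intros ? ?; reflexivity | exact HA].
apply (continuity_pt_comp (fun y => (y + c) / A) dpsi); [|apply dpsi_continuous].
apply derivable_continuous_pt; exists (/ A); apply affine_derivable, HA.
Qed.

Lemma dS_fun_continuous i : continuity (fun y => dS_fun y i).
Proof.
intros x.
apply (CVU_continuity (fun n y => sum_f_R0 (dS_term y i) n) _ x (mkposreal 1 Rlt_0_1)).
- apply dS_partial_sums_CVU.
- intros n y _; induction n as [|n IH]; simpl; [apply dS_term_continuous|].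
  apply (continuity_pt_plus (fun y => sum_f_R0 (dS_term y i) n) (fun y => dS_term y i (S n)));
    [exact IH | apply dS_term_continuous].
- apply Boule_center.
Qed.

Lemma prefix_controls_S_fun (e d : R) : 0 < e -> 0 < d ->
  exists N, forall x i j, (forall m, (m < N)%nat -> i m = j m) ->
    Rabs (S_fun b gamma psi x i - S_fun b gamma psi x j) <= e /\
    Rabs (dS_fun x i - dS_fun x j) <= d.
Proof.
intros He Hd.
assert (HM : 0 <= M) by apply (Rle_trans _ _ _ (Rabs_pos (psi 0)) (psi_bounded 0)).
assert (HM' : 0 <= M' / INR b) by (apply Rle_mult_inv_pos;
  [apply (Rle_trans _ _ _ (Rabs_pos (dpsi 0)) (dpsi_bounded 0)) | apply lt_0_INR; lia]).
destruct (geometric_tail_small (2 * M) gamma ltac:(lra) hgamma e He) as [N0 HN0].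
destruct (geometric_tail_small (2 * (M' / INR b)) (gamma / INR b) ltac:(lra)
  gamma_div_b_lt_1 d Hd) as [N1 HN1].
exists (S (Nat.max N0 N1)); intros x i j Hij.
set (n := Nat.max N0 N1).
assert (Harg : forall k, (k <= n)%nat -> S_arg x i k = S_arg x j k).
{ intros k Hk; unfold S_arg; do 2 f_equal; apply sum_eq; intros m Hm.
  rewrite Hij by lia; reflexivity. }
split.
- eapply Rle_trans.
  + apply (series_sum_close _ _ M gamma n hgamma (S_term_bound x i) (S_term_bound x j)).
    apply sum_eq; intros k Hk; unfold S_term; fold (S_arg x i k) (S_arg x j k).
    rewrite Harg by exact Hk; reflexivity.
  + left; apply HN0; lia.
- eapply Rle_trans.
  + apply (series_sum_close _ _ _ _ n gamma_div_b_lt_1 (dS_term_bound x i) (dS_term_bound x j)).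
    apply sum_eq; intros k Hk; unfold dS_term; rewrite Harg by exact Hk; reflexivity.
  + left; apply HN1; lia.
Qed.

Lemma tangent_iff e d x i j :
  tangent b gamma psi e d x i j <->
  Rabs (S_fun b gamma psi x i - S_fun b gamma psi x j) <= e /\
  Rabs (dS_fun x i - dS_fun x j) <= d.
Proof.
unfold tangent; split.
- intros [HS [di [dj [Hi [Hj Hd]]]]]; split; [exact HS|].
  rewrite (uniqueness_limite _ _ _ _ Hi (S_fun_derivable x i)),
    (uniqueness_limite _ _ _ _ Hj (S_fun_derivable x j)) in Hd; exact Hd.
- intros [HS Hd]; split; [exact HS|].
  exists (dS_fun x i), (dS_fun x j); auto using S_fun_derivable.
Qed.

Lemma tangent_refl e d x i : 0 <= e -> 0 <= d -> tangent b gamma psi e d x i i.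
Proof. intros He Hd; apply tangent_iff; rewrite !Rminus_diag, !Rabs_R0; auto. Qed.

Lemma Borel_tangent e d i j : Borel (fun x => tangent b gamma psi e d x i j).
Proof.
apply (Borel_ext (fun x => ~ (e < Rabs (S_fun b gamma psi x i - S_fun b gamma psi x j) \/
                              d < Rabs (dS_fun x i - dS_fun x j)))).
- apply Borel_compl, Borel_or; apply Borel_continuous_gt, continuity_abs_diff;
    auto using S_fun_continuous, dS_fun_continuous.
- intros x; rewrite tangent_iff; split; [intros H; split; apply Rnot_lt_le; tauto|].
  intros [H1 H2] [H | H]; lra.
Qed.

End SelfAffineSeries.

Lemma Rabs_sub_triang3 (a a' c' c r1 r2 r3 : R) :
  Rabs (a - a') <= r1 -> Rabs (a' - c') <= r2 -> Rabs (c - c') <= r3 ->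
  Rabs (a - c) <= r1 + r2 + r3.
Proof.
intros H1 H2 H3; rewrite Rabs_minus_sym in H3.
replace (a - c) with ((a - a') + (a' - c') + (c' - c)) by ring.
eapply Rle_trans; [apply Rabs_triang|].
apply Rplus_le_compat; [eapply Rle_trans; [apply Rabs_triang|]; lra | exact H3].
Qed.

Lemma In_words b q (w : list nat) : In w (words b q) <-> word b q w.
Proof.
revert w; induction q as [|q IH]; intros w; simpl.
- split; [intros [<- | []]; split; auto|].
  intros [Hw _]; destruct w; [left; reflexivity | discriminate].
- rewrite in_flat_map; split.
  + intros [d [Hd Hw]]; apply in_seq in Hd; apply in_map_iff in Hw as [w' [<- Hw']].
    apply IH in Hw' as [Hlen Hdig]; split; simpl; [congruence | constructor; [lia | exact Hdig]].
  + intros [Hlen Hdig]; destruct w as [|d w]; [discriminate|]; inversion Hdig; subst.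
    exists d; split; [apply in_seq; lia | apply in_map, IH; split; auto].
Qed.

Lemma NoDup_words b q : NoDup (words b q).
Proof.
induction q as [|q IH]; simpl; [constructor; [tauto | constructor]|].
assert (Hflat : forall s, NoDup s -> NoDup (flat_map (fun d => map (cons d) (words b q)) s)).
{ induction 1 as [|d ds Hd _ IHds]; simpl; [constructor|].
  apply NoDup_app; [| exact IHds |].
  - apply Injective_map_NoDup; [intros w w' E; inversion E; reflexivity | exact IH].
  - intros w Hw Hw'; apply in_map_iff in Hw as [w1 [<- _]].
    apply in_flat_map in Hw' as [d' [Hd' Hw']]; apply in_map_iff in Hw' as [w2 [E _]].
    inversion E; subst; contradiction. }
apply Hflat, seq_NoDup.
Qed.

Lemma filter_length_mono {T : Type} (p p' : T -> bool) (l : list T) :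
  (forall v, In v l -> p v = true -> p' v = true) ->
  (length (filter p l) <= length (filter p' l))%nat.
Proof.
induction l as [|v l IH]; intros Hpp'; simpl; [lia|].
assert (IH' := IH (fun w Hw => Hpp' w (or_intror Hw))).
destruct (p v) eqn:Hv; [rewrite (Hpp' v (or_introl eq_refl) Hv); simpl; lia|].
destruct (p' v); simpl; lia.
Qed.

Lemma e_num_ge b gamma psi q x e d u : In u (words b q) ->
  (length (filter (fun v => decP (inE b gamma psi q x e d u v)) (words b q))
   <= e_num b gamma psi q x e d)%nat.
Proof.
intros Hu; unfold e_num.
set (l := map _ (words b q)).
assert (Hmax : Forall (fun k => (k <= list_max l)%nat) l) by (apply list_max_le; lia).
rewrite Forall_forall in Hmax; apply Hmax, in_map_iff; exists u; auto.
Qed.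

Definition phi : R := (sqrt 5 + 1) / 2.

Lemma phi_sq : phi * phi = phi + 1.
Proof.
assert (H5 : sqrt 5 * sqrt 5 = 5) by (apply sqrt_sqrt; lra).
unfold phi; nra.
Qed.

Lemma phi_gt_1 : 1 < phi.
Proof.
assert (H5 : sqrt 5 * sqrt 5 = 5) by (apply sqrt_sqrt; lra).
pose proof (sqrt_pos 5); unfold phi; nra.
Qed.

Lemma phi_inv : / phi = phi - 1.
Proof.
pose proof phi_gt_1; pose proof phi_sq.
apply (Rmult_eq_reg_l phi); [rewrite Rinv_r|]; nra.
Qed.

Definition golden_weight (K : R -> Prop) (y : R) : R := if decP (K y) then 1 else / phi.

Section GoldenWeight.

Variable K : R -> Prop.

Lemma golden_weight_in y : K y -> golden_weight K y = 1.
Proof. intros Hy; unfold golden_weight; rewrite (proj2 (decP_true_iff _) Hy); reflexivity. Qed.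

Lemma golden_weight_out y : ~ K y -> golden_weight K y = phi - 1.
Proof. intros Hy; unfold golden_weight; rewrite decP_false, phi_inv; auto. Qed.

Lemma golden_weight_cases y : golden_weight K y = 1 \/ golden_weight K y = phi - 1.
Proof.
destruct (classic (K y)) as [Hy | Hy];
  [left; apply golden_weight_in | right; apply golden_weight_out]; exact Hy.
Qed.

Lemma golden_weight_pos y : 0 < golden_weight K y.
Proof. pose proof phi_gt_1; destruct (golden_weight_cases y) as [-> | ->]; lra. Qed.

Lemma golden_weight_ratio_le x y : golden_weight K x / golden_weight K y <= phi.
Proof.
pose proof phi_gt_1; pose proof phi_sq.
destruct (golden_weight_cases x) as [-> | ->], (golden_weight_cases y) as [-> | ->];
  unfold Rdiv; [| rewrite <- phi_inv, Rinv_inv | rewrite Rinv_1 | rewrite Rinv_r]; lra.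
Qed.

Lemma golden_weight_ratio_out x y : ~ K x -> golden_weight K x / golden_weight K y <= 1.
Proof.
intros Hx; pose proof phi_gt_1; pose proof phi_sq; rewrite golden_weight_out by exact Hx.
destruct (golden_weight_cases y) as [-> | ->]; unfold Rdiv; [rewrite Rinv_1 | rewrite Rinv_r];
  nra.
Qed.

Lemma golden_weight_ratio_out_in x y : ~ K x -> K y ->
  golden_weight K x / golden_weight K y = phi - 1.
Proof. intros Hx Hy; rewrite golden_weight_out, golden_weight_in by auto; field. Qed.

Lemma golden_ratio_sum_le x (ys : list R) :
  (K x -> (length ys <= 1)%nat) -> (length ys <= 2)%nat ->
  (length ys = 2%nat -> exists y, In y ys /\ K y) ->
  fold_right Rplus 0 (map (fun y => golden_weight K x / golden_weight K y) ys) <= phi.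
Proof.
intros Hin Hle2 Hpair; pose proof phi_gt_1.
destruct ys as [| y1 [| y2 [| y3 ys]]]; simpl in *; try lia.
- lra.
- pose proof (golden_weight_ratio_le x y1); lra.
- destruct (classic (K x)) as [Kx | Kx]; [specialize (Hin Kx); lia|].
  destruct (Hpair eq_refl) as [y [Hy Ky]].
  pose proof (golden_weight_ratio_out x y1 Kx); pose proof (golden_weight_ratio_out x y2 Kx).
  destruct Hy as [<- | [<- | []]];
    [rewrite (golden_weight_ratio_out_in x y1) | rewrite (golden_weight_ratio_out_in x y2)];
    auto; lra.
Qed.

Lemma golden_weight_is_weight : Borel K -> weight (golden_weight K).
Proof.
intros HK; pose proof phi_gt_1; split; [|split].
- apply measurable01_Borel; intros B HB.
  apply (Borel_decP_preimage K (fun c _ => if c then 1 else / phi)); [exact HK|].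
  intros c; apply Borel_const.
- intros y _; apply golden_weight_pos.
- exists phi; intros y _; destruct (golden_weight_cases y) as [-> | ->];
    [rewrite Rinv_1 | rewrite <- phi_inv, Rinv_inv, phi_inv]; lra.
Qed.

End GoldenWeight.

Lemma fold_right_Rmax_le (l : list R) (c : R) :
  0 <= c -> (forall y, In y l -> y <= c) -> fold_right Rmax 0 l <= c.
Proof.
induction l as [|y l IH]; intros Hc Hl; simpl; [exact Hc|].
apply Rmax_lub; [apply Hl; left; reflexivity | apply IH; auto using in_cons].
Qed.

Lemma weighted_row_sum {T : Type} (p : T -> bool) (f : T -> R) (c a : R) (l : list T) :
  a <> 0 -> (forall v, f v <> 0) ->
  c / a * fold_right Rplus 0 (map (fun v => if p v then a / f v else 0) l) =
  fold_right Rplus 0 (map (fun v => c / f v) (filter p l)).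
Proof.
intros Ha Hf; induction l as [|v l IH]; simpl; [ring|].
destruct (p v); simpl; rewrite <- IH; [field; auto | ring].
Qed.

Section GoldenTestingFunction.

Variables (b : nat) (gamma : R) (psi dpsi : R -> R) (M M' : R).
Hypothesis hb : (2 <= b)%nat.
Hypothesis hgamma : 0 <= gamma < 1.
Hypothesis psi_bounded : forall y, Rabs (psi y) <= M.
Hypothesis dpsi_bounded : forall y, Rabs (dpsi y) <= M'.
Hypothesis psi_derivable : forall y, derivable_pt_lim psi y (dpsi y).
Hypothesis dpsi_continuous : continuity dpsi.

Variables (q L : nat) (eps delta : R) (K : R -> Prop).
Hypothesis heps : 0 < eps.
Hypothesis hdelta : 0 < delta.

(* Unlike E, this relation is visibly Borel in x. *)
Definition tangent_trunc (x : R) (u v : list nat) : Prop :=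
  exists a c, In a (words b L) /\ In c (words b L) /\
    tangent b gamma psi eps delta x
      (Defs.concat u (Defs.concat a (fun _ => 0%nat)))
      (Defs.concat v (Defs.concat c (fun _ => 0%nat))).

Definition golden_test (x : R) (u v : list nat) : R :=
  if decP (tangent_trunc x u v)
  then golden_weight K (xmap b x u) / golden_weight K (xmap b x v) else 0.

Lemma digit_seq_concat_words a : In a (words b L) -> digit_seq b (Defs.concat a (fun _ => 0%nat)).
Proof.
intros Ha n; apply In_words in Ha as [_ Ha]; rewrite Forall_forall in Ha; unfold Defs.concat.
destruct (Nat.ltb_spec n (length a)); [apply Ha, nth_In; assumption | lia].
Qed.

Lemma tangent_trunc_inE x u v : word b q u -> word b q v ->
  tangent_trunc x u v -> inE b gamma psi q x eps delta u v.
Proof.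
intros Hu Hv [a [c [Ha [Hc Htan]]]]; split; [exact Hu|]; split; [exact Hv|].
exists (Defs.concat a (fun _ => 0%nat)), (Defs.concat c (fun _ => 0%nat)).
auto using digit_seq_concat_words.
Qed.

Lemma tangent_trunc_refl x u : tangent_trunc x u u.
Proof.
set (a := repeat 0%nat L).
assert (Ha : In a (words b L)).
{ apply In_words; split; [apply repeat_length|].
  apply Forall_forall; intros d Hd; apply repeat_spec in Hd; lia. }
exists a, a; split; [exact Ha|]; split; [exact Ha|].
apply (tangent_refl b gamma psi dpsi M M'); auto; lra.
Qed.

Lemma Borel_tangent_trunc u v : Borel (fun x => tangent_trunc x u v).
Proof.
apply (Borel_ext (fun x => exists a, In a (words b L) /\ exists c, In c (words b L) /\
  tangent b gamma psi eps delta x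
    (Defs.concat u (Defs.concat a (fun _ => 0%nat)))
    (Defs.concat v (Defs.concat c (fun _ => 0%nat))))).
- apply Borel_exists_in_list; intros a _; apply Borel_exists_in_list; intros c _.
  apply (Borel_tangent b gamma psi dpsi M M'); assumption.
- intros x; unfold tangent_trunc; split.
  + intros [a [Ha [c [Hc H]]]]; exists a, c; auto.
  + intros [a [c [Ha [Hc H]]]]; exists a; split; [|exists c]; auto.
Qed.

Lemma concat_truncation_agree (u : list nat) (w : nat -> nat) m :
  (m < length u + L)%nat ->
  Defs.concat u (Defs.concat (map w (seq 0 L)) (fun _ => 0%nat)) m = Defs.concat u w m.
Proof.
intros Hm; unfold Defs.concat; destruct (Nat.ltb_spec m (length u)); [reflexivity|].
rewrite length_map, length_seq.
destruct (Nat.ltb_spec (m - length u) L); [|lia].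
rewrite (nth_indep _ _ (w 0%nat)) by (rewrite length_map, length_seq; lia).
rewrite map_nth, seq_nth by lia; reflexivity.
Qed.

Lemma truncation_in_words (w : nat -> nat) : digit_seq b w -> In (map w (seq 0 L)) (words b L).
Proof.
intros Hw; apply In_words; split; [rewrite length_map, length_seq; reflexivity|].
apply Forall_forall; intros d Hd; apply in_map_iff in Hd as [k [<- _]]; apply Hw.
Qed.

Hypothesis prefix_control : forall x i j, (forall m, (m < L)%nat -> i m = j m) ->
  Rabs (S_fun b gamma psi x i - S_fun b gamma psi x j) <= eps / 4 /\
  Rabs (dS_fun b gamma dpsi x i - dS_fun b gamma dpsi x j) <= delta / 4.

Lemma inE_half_tangent_trunc x u v :
  inE b gamma psi q x (eps / 2) (delta / 2) u v -> tangent_trunc x u v.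
Proof.
intros [Hu [Hv [u' [v' [Hu' [Hv' Htan]]]]]].
rewrite (tangent_iff b gamma psi dpsi M M') in Htan by assumption.
destruct Htan as [HS HdS].
exists (map u' (seq 0 L)), (map v' (seq 0 L)).
split; [apply truncation_in_words, Hu'|]; split; [apply truncation_in_words, Hv'|].
rewrite (tangent_iff b gamma psi dpsi M M') by assumption.
destruct (prefix_control x (Defs.concat u (Defs.concat (map u' (seq 0 L)) (fun _ => 0%nat)))
  (Defs.concat u u')) as [HSu HdSu]; [intros; apply concat_truncation_agree; lia|].
destruct (prefix_control x (Defs.concat v (Defs.concat (map v' (seq 0 L)) (fun _ => 0%nat)))
  (Defs.concat v v')) as [HSv HdSv]; [intros; apply concat_truncation_agree; lia|].
split.
- replace eps with (eps / 4 + eps / 2 + eps / 4) by field.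
  eapply Rabs_sub_triang3; eassumption.
- replace delta with (delta / 4 + delta / 2 + delta / 4) by field.
  eapply Rabs_sub_triang3; eassumption.
Qed.

Lemma inE_sym x e d u v :
  inE b gamma psi q x e d u v -> inE b gamma psi q x e d v u.
Proof.
intros [Hu [Hv [u' [v' [Hu' [Hv' [HS [di [dj [Hi [Hj Hd]]]]]]]]]]].
split; [exact Hv|]; split; [exact Hu|]; exists v', u'; split; [exact Hv'|]; split; [exact Hu'|].
split; [rewrite Rabs_minus_sym; exact HS|].
exists dj, di; split; [exact Hj|]; split; [exact Hi|]; rewrite Rabs_minus_sym; exact Hd.
Qed.

Lemma golden_test_admissible : Borel K -> admissible b gamma psi q golden_test.
Proof.
intros HK; pose proof (golden_weight_pos K) as Hpos; split; [|split].
- intros u v _ _; apply measurable01_Borel; intros B HB.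
  apply (Borel_decP_preimage (fun x => tangent_trunc x u v)
    (fun c x => if c then golden_weight K (xmap b x u) / golden_weight K (xmap b x v) else 0));
    [apply Borel_tangent_trunc | intros [|]; [|apply Borel_const]].
  assert (Hx : forall w, Borel (fun x => K (xmap b x w))) by
    (intros w; apply Borel_affine_preimage; [exact HK | apply pow_INR_b_pos; exact hb]).
  apply (Borel_decP_preimage (fun x => K (xmap b x u))
    (fun c x => (if c then 1 else / phi) / golden_weight K (xmap b x v))); [apply Hx|].
  intros c; apply (Borel_decP_preimage (fun x => K (xmap b x v))
    (fun c' _ => (if c then 1 else / phi) / (if c' then 1 else / phi))); [apply Hx|].
  intros c'; apply Borel_const.
- intros x u v _ _ _; unfold golden_test; destruct (decP _); [|lra].
  apply Rlt_le, Rdiv_lt_0_compat; apply Hpos.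
- exists (eps / 2), (delta / 2); split; [lra|]; split; [lra|].
  intros x u v _ Huv; unfold golden_test.
  rewrite !(proj2 (decP_true_iff _)) by (apply inE_half_tangent_trunc; auto using inE_sym).
  right; field; split; apply Rgt_not_eq, Hpos.
Qed.

Hypothesis e_num_le_in : forall x, 0 <= x < 1 -> K x ->
  (e_num b gamma psi q x eps delta <= 1)%nat.
Hypothesis e_num_le_out : forall x, 0 <= x < 1 -> ~ K x ->
  (e_num b gamma psi q x eps delta <= 2)%nat.
Hypothesis tangent_pair_meets_K : forall x u v, 0 <= x < 1 -> ~ K x ->
  inE b gamma psi q x eps delta u v -> u <> v -> K (xmap b x u) \/ K (xmap b x v).

Definition trunc_row (x : R) (u : list nat) : list (list nat) :=
  filter (fun v => decP (tangent_trunc x u v)) (words b q).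

Lemma trunc_row_length_le x u : In u (words b q) ->
  (length (trunc_row x u) <= e_num b gamma psi q x eps delta)%nat.
Proof.
intros Hu; eapply Nat.le_trans; [|apply e_num_ge, Hu].
apply filter_length_mono; intros v Hv Htv; apply decP_true_iff.
apply tangent_trunc_inE; [apply In_words, Hu | apply In_words, Hv | apply decP_true_iff, Htv].
Qed.

Lemma trunc_row_pair_meets_K x u : 0 <= x < 1 -> ~ K x -> In u (words b q) ->
  length (trunc_row x u) = 2%nat -> exists v, In v (trunc_row x u) /\ K (xmap b x v).
Proof.
intros Hx Kx Hu Hlen.
assert (Hrow : forall v, In v (trunc_row x u) <-> In v (words b q) /\ tangent_trunc x u v).
{ intros v; unfold trunc_row; rewrite filter_In, decP_true_iff; reflexivity. }
assert (Hnd : NoDup (trunc_row x u)) by apply NoDup_filter, NoDup_words.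
assert (Huu : In u (trunc_row x u)) by (apply Hrow; auto using tangent_trunc_refl).
assert (Hw : exists w, In w (trunc_row x u) /\ w <> u).
{ destruct (trunc_row x u) as [| v1 [| v2 [|]]]; try discriminate.
  inversion Hnd as [| ? ? Hv12 _]; subst.
  destruct (list_eq_dec Nat.eq_dec v1 u) as [-> | Hne];
    [exists v2; split; [right; left; reflexivity | intros ->; apply Hv12; left; reflexivity]
    | exists v1; split; [left; reflexivity | exact Hne]]. }
destruct Hw as [w [Hwrow Hwu]]; pose proof Hwrow as Hw'; apply Hrow in Hw' as [Hww Htw].
destruct (tangent_pair_meets_K x u w Hx Kx) as [Ku | Kw];
  [apply tangent_trunc_inE; auto; apply In_words; assumption
  | intros ->; apply Hwu; reflexivity | exists u | exists w]; auto.
Qed.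

Lemma Sigma_golden_test_le x : 0 <= x < 1 ->
  Sigma b q (golden_weight K) golden_test x <= phi.
Proof.
intros Hx; pose proof phi_gt_1; pose proof (golden_weight_pos K) as Hpos.
apply fold_right_Rmax_le; [lra|]; intros s Hs; apply in_map_iff in Hs as [u [<- Hu]].
unfold golden_test.
rewrite (weighted_row_sum (fun v => decP (tangent_trunc x u v))
  (fun v => golden_weight K (xmap b x v))) by (intros; apply Rgt_not_eq, Hpos).
fold (trunc_row x u).
rewrite <- (map_map (xmap b x) (fun y => golden_weight K x / golden_weight K y)).
pose proof (trunc_row_length_le x u Hu).
apply golden_ratio_sum_le; rewrite length_map.
- intros Kx; specialize (e_num_le_in x Hx Kx); lia.
- destruct (classic (K x)) as [Kx | Kx];
    [specialize (e_num_le_in x Hx Kx) | specialize (e_num_le_out x Hx Kx)]; lia.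
- intros Hlen; destruct (classic (K x)) as [Kx | Kx];
    [specialize (e_num_le_in x Hx Kx); lia|].
  destruct (trunc_row_pair_meets_K x u Hx Kx Hu Hlen) as [v [Hv Kv]].
  exists (xmap b x v); split; [apply in_map|]; assumption.
Qed.

End GoldenTestingFunction.


Theorem lemma2p11
  (b : nat) (hb : (2 <= b)%nat)
  (gamma : R) (hgamma : / INR b < gamma < 1)
  (psi : R -> R) (hper : forall x, psi (x + 1) = psi x)
  (hC1 : exists dpsi : R -> R,
           (forall x, derivable_pt_lim psi x (dpsi x)) /\ continuity dpsi)
  (q : nat) (hq : (1 <= q)%nat)
  (eps delta : R) (heps : 0 < eps) (hdelta : 0 < delta)
  (K : R -> Prop) (hKB : Borel K) (hK01 : forall x, K x -> 0 <= x < 1)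
  (hi1 : forall x, 0 <= x < 1 -> K x -> (e_num b gamma psi q x eps delta <= 1)%nat)
  (hi2 : forall x, 0 <= x < 1 -> ~ K x -> (e_num b gamma psi q x eps delta <= 2)%nat)
  (hii : forall x u v, 0 <= x < 1 -> ~ K x ->
           inE b gamma psi q x eps delta u v -> u <> v ->
           K (xmap b x u) \/ K (xmap b x v)) :
  sigma_le b gamma psi q ((sqrt 5 + 1) / 2).
Proof.
destruct hC1 as [dpsi [psi_derivable dpsi_continuous]].
assert (psi_continuous : continuity psi) by
  (intros x; apply derivable_continuous_pt; exists (dpsi x); apply psi_derivable).
destruct (continuous_periodic_bounded psi hper psi_continuous) as [M HM].
destruct (continuous_periodic_bounded dpsi
  (derivative_periodic psi dpsi hper psi_derivable) dpsi_continuous) as [M' HM'].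
assert (hg : 0 <= gamma < 1).
{ assert (0 < / INR b) by (apply Rinv_0_lt_compat, lt_0_INR; lia); lra. }
destruct (prefix_controls_S_fun b gamma psi dpsi M M' hb hg HM HM'
  (eps / 4) (delta / 4) ltac:(lra) ltac:(lra)) as [L HL].
intros eta Heta; exists (golden_weight K), (golden_test b gamma psi L eps delta K).
split; [apply golden_weight_is_weight, hKB|]; split.
- apply (golden_test_admissible b gamma psi dpsi M M'); assumption.
- apply null_set_empty; intros x [Hx Hlt].
  pose proof (Sigma_golden_test_le b gamma psi dpsi M M' hb hg HM HM' psi_derivable
    q L eps delta K heps hdelta hi1 hi2 hii x Hx).
  fold phi in Hlt; lra.
Qed.
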